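(* Let $n\ge2$ and let $U^+$ be the subalgebra of $U_{r,s}(\mathfrak{so}_{2n+1})$ generated by $e_1,\dots,e_n$, with root vectors as in the context. Then in $U^+$: (1) $e_i\mathcal E_{i,j}=s^2\mathcal E_{i,j}e_i$ for $1\le i<j\le n$; (2) $e_i\mathcal E_{i,j'}=s^2\mathcal E_{i,j'}e_i$ for $i+1<j\le n$; (3) $\mathcal E_{i,j}e_j=s^2e_j\mathcal E_{i,j}$ for $1\le i<j<n$; (4) $\mathcal E_{i,n'}e_n=s^2e_n\mathcal E_{i,n'}$ for $1\le i<n$; (5) $\mathcal E_{i,j'}e_j=r^{-2}e_j\mathcal E_{i,j'}$ for $1\le i<j<n$.
   Context: Let $r,s\in\mathbb C^*$ with $r^3\ne s^3$, $r^4\ne s^4$, $\mathbb K=\mathbb Q(r,s)$. $U_{r,s}(\mathfrak{so}_{2n+1})$ is the $\mathbb K$-algebra generated by $e_i,f_i,\omega_i^{\pm1},\omega_i'^{\pm1}$ ($1\le i\le n$) with: $\omega$'s commute, invertible; $\omega_je_i\omega_j^{-1}=\langle\omega_i',\omega_j\rangle e_i$, $\omega_jf_i\omega_j^{-1}=\langle\omega_i',\omega_j\rangle^{-1}f_i$, $\omega_j'e_i\omega_j'^{-1}=\langle\omega_j',\omega_i\rangle^{-1}e_i$, $\omega_j'f_i\omega_j'^{-1}=\langle\omega_j',\omega_i\rangle f_i$, where $\langle\omega_i',\omega_i\rangle=r^2s^{-2}$ ($i<n$), $\langle\omega_n',\omega_n\rangle=rs^{-1}$, $\langle\omega_i',\omega_{i+1}\rangle=r^{-2}$,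 $\langle\omega_{i+1}',\omega_i\rangle=s^2$ ($i<n$), others $1$; $e_if_j-f_je_i=\delta_{ij}(\omega_i-\omega_i')/(r_i-s_i)$ ($r_i=r^2,s_i=s^2$ for $i<n$; $r_n=r,s_n=s$); Serre relations $(\mathrm{ad}_le_i)^{1-a_{ij}}(e_j)=0=(\mathrm{ad}_rf_i)^{1-a_{ij}}(f_j)$, $i\ne j$, with $(a_{ij})$ the $B_n$ Cartan matrix ($a_{ii}=2$, $a_{i,i+1}=a_{i+1,i}=-1$ for $i\le n-2$, $a_{n-1,n}=-1$, $a_{n,n-1}=-2$, else $0$), $\mathrm{ad}_l(a)(b)=\sum a_{(1)}bS(a_{(2)})$, $\mathrm{ad}_r(a)(b)=\sum S(a_{(1)})ba_{(2)}$, for the Hopf structure $\Delta(\omega)=\omega\otimes\omega$, $\Delta(e_i)=e_i\otimes1+\omega_i\otimes e_i$, $\Delta(f_i)=1\otimes f_i+f_i\otimes\omega_i'$, $S(e_i)=-\omega_i^{-1}e_i$, $S(f_i)=-f_i\omega_i'^{-1}$. Root vectors: $\mathcal E_{i,i}=e_i$, $\mathcal E_{i,j}=e_i\mathcal E_{i+1,j}-r^2\mathcal E_{i+1,j}e_i$ ($1\le i<j\le n$), $\mathcal E_{i,n'}=\mathcal E_{i,n}e_n-rs\,e_n\mathcal E_{i,n}$ ($i\le n-1$), $\mathcal E_{i,j'}=\mathcal E_{i,(j+1)'}e_j-s^{-2}e_j\mathcal E_{i,(j+1)'}$ ($1\le i<j\le n-1$). *)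

From HB Require Import structures.
From mathcomp Require Import all_boot all_order all_algebra.
Set Implicit Arguments. Unset Strict Implicit. Unset Printing Implicit Defensive.
Import Order.TTheory GRing.Theory Num.Theory.
Local Open Scope ring_scope.

(* Generators are indexed by natural numbers; only indices 1..n are used. *)

Section Urs.
Variables (K : fieldType) (A : algType K) (r s : K) (n : nat).

(* <omega_i', omega_j> for 1 <= i, j <= n *)
Definition pairing (i j : nat) : K :=
  if i == j then (if (i < n)%N then r ^+ 2 / s ^+ 2 else r / s)
  else if (j == i.+1) && (i < n)%N then r ^- 2
  else if (i == j.+1) && (j < n)%N then s ^+ 2
  else 1.

Definition ri (i : nat) : K := if (i < n)%N then r ^+ 2 else r.
Definition si (i : nat) : K := if (i < n)%N then s ^+ 2 else s.

(* 1 - a_{ij} for i <> j, (a_{ij}) the Cartan matrix of type B_n *)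
Definition serre_exp (i j : nat) : nat :=
  if j == i.+1 then 2
  else if i == j.+1 then (if i == n then 3 else 2)
  else 1.

(* ad_l(e_i)(b) = e_i b S(1) + omega_i b S(e_i) = e_i b - omega_i b omega_i^{-1} e_i *)
Definition adl (ei wi wiinv : A) (b : A) : A := ei * b - wi * b * wiinv * ei.
(* ad_r(f_i)(b) = S(1) b f_i + S(f_i) b omega_i' = b f_i - f_i omega_i'^{-1} b omega_i' *)
Definition adr (fi w'i w'iinv : A) (b : A) : A := b * fi - fi * w'iinv * b * w'i.

Definition Urs_relations (e f w winv w' w'inv : nat -> A) : Prop :=
  [/\ (forall i, (1 <= i <= n)%N ->
         [/\ w i * winv i = 1, winv i * w i = 1,
             w' i * w'inv i = 1 & w'inv i * w' i = 1]),
      (forall i j, (1 <= i <= n)%N -> (1 <= j <= n)%N ->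
         [/\ w i * w j = w j * w i, w' i * w' j = w' j * w' i
           & w i * w' j = w' j * w i]),
      (forall i j, (1 <= i <= n)%N -> (1 <= j <= n)%N ->
         [/\ w j * e i * winv j = pairing i j *: e i,
             w j * f i * winv j = (pairing i j)^-1 *: f i,
             w' j * e i * w'inv j = (pairing j i)^-1 *: e i
           & w' j * f i * w'inv j = pairing j i *: f i]),
      (forall i j, (1 <= i <= n)%N -> (1 <= j <= n)%N ->
         e i * f j - f j * e i =
           if i == j then (ri i - si i)^-1 *: (w i - w' i) else 0)
    & (forall i j, (1 <= i <= n)%N -> (1 <= j <= n)%N -> i != j ->
         iter (serre_exp i j) (adl (e i) (w i) (winv i)) (e j) = 0 /\
         iter (serre_exp i j) (adr (f i) (w' i) (w'inv i)) (f j) = 0)].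

Variable e : nat -> A.

(* Ev k i = E_{i,i+k} *)
Fixpoint Ev (k i : nat) : A :=
  match k with
  | 0 => e i
  | k'.+1 => e i * Ev k' i.+1 - r ^+ 2 *: (Ev k' i.+1 * e i)
  end.

Definition Eij (i j : nat) : A := Ev (j - i) i.

(* Epv k i = E_{i,(n-k)'} *)
Fixpoint Epv (k i : nat) : A :=
  match k with
  | 0 => Eij i n * e n - (r * s) *: (e n * Eij i n)
  | k'.+1 => Epv k' i * e (n - k) - s ^- 2 *: (e (n - k) * Epv k' i)
  end.

Definition Eijp (i j : nat) : A := Epv (n - j) i.

End Urs.

From HB Require Import structures.
From mathcomp Require Import all_boot all_order all_algebra.
From mathcomp Require Import ring zify.
Set Implicit Arguments. Unset Strict Implicit. Unset Printing Implicit Defensive.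
Import Order.TTheory GRing.Theory Num.Theory.
Local Open Scope ring_scope.

(* Write [x, y]_c for x y - c y x.  Each claim is the vanishing of a
   q-commutator.  Since ad_l(e_i) x = [e_i, x]_c whenever w_i x w_i^-1 = c x,
   the defining relations make e_i and e_j commute for |i - j| > 1 and give
   the Serre relations [e_i, [e_i, e_(i+1)]_(s^2)]_(r^2) = 0,
   [[e_i, e_(i+1)]_(r^2), e_(i+1)]_(s^2) = 0 and [E_(n-1,n'), e_n]_(s^2) = 0.
   These propagate along the recursive definitions of the root vectors by the
   twisted Jacobi identity [[u, y]_a, w]_c = [u, [y, w]_c]_a, valid when u and
   w commute.  The only further ingredient is that e_(i+1) commutes with
   E_(i,n); this is where r^2 + s^2 <> 0, i.e. r^4 <> s^4, is needed. *)

Section QCommutator.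
Variables (K : fieldType) (A : algType K).
Implicit Types (u v w x y z E G W Wi Z : A) (a b c d k p q t : K).

Definition qcomm x y c : A := x * y - c *: (y * x).

Lemma qcomm_eq0 x y c : (qcomm x y c = 0) <-> (x * y = c *: (y * x)).
Proof. by rewrite /qcomm; split=> [/eqP|->]; [rewrite subr_eq0 => /eqP|rewrite subrr]. Qed.

Lemma qcomm0l y c : qcomm 0 y c = 0.
Proof. by rewrite /qcomm mul0r mulr0 scaler0 subr0. Qed.

Lemma qcomm0r x c : qcomm x 0 c = 0.
Proof. by rewrite /qcomm mul0r mulr0 scaler0 subr0. Qed.

Lemma qcommZr x y c k : qcomm x (k *: y) c = k *: qcomm x y c.
Proof. by rewrite /qcomm -scalerAr -scalerAl scalerBr !scalerA mulrC. Qed.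

Lemma qcommC x y c : c != 0 -> qcomm y x c = - c *: qcomm x y c^-1.
Proof.
move=> c_neq0; rewrite /qcomm scalerBr scalerA mulNr mulfV // scaleN1r opprK.
by rewrite scaleNr addrC.
Qed.

Lemma commrZ x y k : GRing.comm x y -> GRing.comm x (k *: y).
Proof. by rewrite /GRing.comm -scalerAr -scalerAl => ->. Qed.

Lemma commr_qcomm u x y c :
  GRing.comm u x -> GRing.comm u y -> GRing.comm u (qcomm x y c).
Proof. by move=> ux uy; apply/commrB/commrZ; apply: commrM. Qed.

Lemma qcommA u w y a c : GRing.comm u w ->
  qcomm (qcomm u y a) w c = qcomm u (qcomm y w c) a.
Proof.
move=> uw; rewrite /qcomm !(mulrBl, mulrBr) -!(scalerAl, scalerAr) !scalerBr !scalerA.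
rewrite !mulrA -(mulrA y u w) uw mulrA (mulrC c a).
by rewrite !opprB !addrA addrAC [RHS]addrAC [in RHS](addrAC (u * y * w)).
Qed.

Lemma qcomm2lE u v c d : qcomm u (qcomm u v c) d =
  u * u * v - (c + d) *: (u * v * u) + (c * d) *: (v * u * u).
Proof.
rewrite /qcomm mulrBr mulrBl -scalerAr -scalerAl !mulrA scalerBr scalerA.
by rewrite scalerDl opprB opprD (mulrC d c) !addrA addrAC.
Qed.

Lemma qcomm2rE x y c d : qcomm (qcomm x y c) y d =
  x * y * y - (c + d) *: (y * x * y) + (c * d) *: (y * y * x).
Proof.
rewrite /qcomm mulrBr mulrBl -scalerAr -scalerAl !mulrA scalerBr scalerA.
by rewrite scalerDl opprB opprD (mulrC d c) !addrA addrAC.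
Qed.

Lemma qcomm2lC u v c d : qcomm u (qcomm u v c) d = qcomm u (qcomm u v d) c.
Proof. by rewrite !qcomm2lE (addrC d) (mulrC d). Qed.

Lemma qcomm2rEl x y c d : c != 0 -> d != 0 ->
  qcomm (qcomm x y c) y d = (c * d) *: qcomm y (qcomm y x c^-1) d^-1.
Proof.
move=> c_neq0 d_neq0; rewrite qcomm2rE qcomm2lE scalerDr scalerBr !scalerA.
have -> : c * d * (c^-1 + d^-1) = c + d by field; rewrite c_neq0 d_neq0.
have -> : c * d * (c^-1 * d^-1) = 1 by field; rewrite c_neq0 d_neq0.
by rewrite scale1r addrC addrA addrAC.
Qed.

Lemma qcomm_skew_mulr x y E a t : E * y = t *: (y * E) ->
  qcomm x E a * y = (a * t) *: (y * qcomm x E a)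
                    + (t *: (qcomm x y a * E) - a *: (E * qcomm x y a)).
Proof.
move=> Ey; have : x * y = qcomm x y a + a *: (y * x) by rewrite subrK.
move: (qcomm x y a) => Z xy.
rewrite /qcomm mulrBl -scalerAl -!mulrA Ey -scalerAr [x * (y * E)]mulrA.
rewrite xy mulrDl mulrDr -scalerAl -scalerAr mulrA Ey -scalerAl.
rewrite mulrBr -scalerAr !mulrA !scalerDr !scalerN !scalerA.
by rewrite (mulrC t a) mulrAC opprD addrACA addrC.
Qed.

Lemma qcomm_skew_mull y Z G a t : y * Z = t *: (Z * y) ->
  y * qcomm Z G a = (a * t) *: (qcomm Z G a * y)
                    + (t *: (Z * qcomm y G a) - a *: (qcomm y G a * Z)).
Proof.
move=> yZ; have : y * G = qcomm y G a + a *: (G * y) by rewrite subrK.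
move: (qcomm y G a) => E yG.
rewrite /qcomm mulrBr -scalerAr !mulrA yZ -scalerAl -[Z * y * G]mulrA yG.
rewrite mulrDr mulrDl -scalerAr -scalerAl -[G * y * Z]mulrA yZ -scalerAr.
rewrite mulrBl -scalerAl !mulrA !scalerDr !scalerN !scalerA.
by rewrite (mulrC t a) mulrAC opprD addrACA addrC.
Qed.

(* With F := [x, [y, G]_a]_a = [[x, y]_a, G]_a, both y F and F y are a/b
   times the other plus the same term, so (1 + a/b) (F y - y F) = 0. *)
Lemma commr_qcomm_serre x y G a b : b != 0 -> a + b != 0 -> GRing.comm x G ->
    qcomm y (qcomm y G a) b = 0 -> qcomm (qcomm x y a) y b = 0 ->
  GRing.comm y (qcomm x (qcomm y G a) a).
Proof.
move=> b_neq0 ab_neq0 xG /qcomm_eq0 yE /qcomm_eq0 Zy.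
have Ey : qcomm y G a * y = b^-1 *: (y * qcomm y G a).
  by rewrite yE scalerA mulVf // scale1r.
have yZ : y * qcomm x y a = b^-1 *: (qcomm x y a * y).
  by rewrite Zy scalerA mulVf // scale1r.
have Fy := qcomm_skew_mulr x a Ey; have yF := qcomm_skew_mull G a yZ.
have k_neq : 1 + a / b != 0.
  by rewrite -[1](divff b_neq0) -mulrDl mulf_neq0 ?invr_neq0 // addrC.
rewrite qcommA // in yF; move: Fy yF k_neq.
move: (qcomm x _ a) (b^-1 *: _ - a *: _) (a / b) => F R k Fy yF k_neq.
have DE : F * y - y * F = - k *: (F * y - y * F).
  by rewrite {1}Fy {2}yF opprD addrACA subrr addr0 scaleNr scalerBr opprB.
have : (1 + k) *: (F * y - y * F) = 0 by rewrite scalerDl scale1r {1}DE scaleNr addNr.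
by move/eqP; rewrite scaler_eq0 (negbTE k_neq) subr_eq0 => /eqP.
Qed.

Lemma qcomm3C_eq0 x z c1 c2 c3 : c1 != 0 -> c2 != 0 -> c3 != 0 ->
    qcomm z (qcomm z (qcomm z x c1) c2) c3 = 0 ->
  qcomm (qcomm (qcomm x z c1^-1) z c2^-1) z c3^-1 = 0.
Proof.
move=> c1_neq0 c2_neq0 c3_neq0.
rewrite (qcommC x) // qcommZr (qcommC (qcomm x z _)) // !qcommZr qcommC // !scalerA.
move/eqP; rewrite scaler_eq0 !mulf_eq0 !oppr_eq0.
by rewrite (negbTE c1_neq0) (negbTE c2_neq0) (negbTE c3_neq0) => /eqP.
Qed.

Lemma conj_qcomm W Wi x y p q c : Wi * W = 1 ->
    W * x * Wi = p *: x -> W * y * Wi = q *: y ->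
  W * qcomm x y c * Wi = (p * q) *: qcomm x y c.
Proof.
move=> WiW Wx Wy.
have conjM u v : W * (u * v) * Wi = (W * u * Wi) * (W * v * Wi).
  by rewrite !mulrA -(mulrA (W * u) Wi W) WiW mulr1.
rewrite /qcomm mulrBr mulrBl -scalerAr -scalerAl !conjM Wx Wy.
rewrite -!scalerAl -!scalerAr !scalerA scalerBr scalerA.
by congr (_ - _ *: _); ring.
Qed.

Lemma adl_qcomm u W Wi x c : W * x * Wi = c *: x -> adl u W Wi x = qcomm u x c.
Proof. by move=> Wx; rewrite /adl Wx -scalerAl. Qed.

End QCommutator.

Section CartanData.
Variables (K : fieldType) (r s : K) (n : nat).

Lemma pairing_diag i : (i < n)%N -> pairing r s n i i = r ^+ 2 / s ^+ 2.
Proof. by move=> lt_in; rewrite /pairing eqxx lt_in. Qed.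

Lemma pairing_nn : pairing r s n n n = r / s.
Proof. by rewrite /pairing eqxx ltnn. Qed.

Lemma pairing_up i : (i < n)%N -> pairing r s n i i.+1 = r ^- 2.
Proof. by move=> lt_in; rewrite /pairing ifF ?eqxx ?lt_in //; lia. Qed.

Lemma pairing_down i : (i < n)%N -> pairing r s n i.+1 i = s ^+ 2.
Proof.
move=> lt_in; rewrite /pairing.
have [-> ->] : (i.+1 == i) = false /\ (i == i.+2) = false by lia.
by rewrite eqxx lt_in.
Qed.

Lemma pairing_far i j : (i.+2 <= j)%N -> pairing r s n j i = 1.
Proof. by move=> lt_ij; rewrite /pairing !ifF //; lia. Qed.

Lemma pairing_pred_n : (0 < n)%N -> pairing r s n n.-1 n = r ^- 2.
Proof.
move=> n_gt0; rewrite /pairing (_ : (n.-1 == n) = false); last lia.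
by rewrite prednK // eqxx leqnn.
Qed.

Lemma serre_exp_far i j : (i.+2 <= j)%N -> serre_exp n i j = 1%N.
Proof. by move=> lt_ij; rewrite /serre_exp !ifF //; lia. Qed.

Lemma serre_exp_up i : serre_exp n i i.+1 = 2%N.
Proof. by rewrite /serre_exp eqxx. Qed.

Lemma serre_exp_down i : (i.+1 < n)%N -> serre_exp n i.+1 i = 2%N.
Proof. by move=> lt_in; rewrite /serre_exp ifF ?eqxx ?ifF //; lia. Qed.

Lemma serre_exp_short : (1 <= n)%N -> serre_exp n n n.-1 = 3%N.
Proof. by move=> n_gt0; rewrite /serre_exp ifF ?ifT ?eqxx //; lia. Qed.
End CartanData.

Section RootVectors.
Variables (K : fieldType) (A : algType K) (r s : K) (n : nat) (e : nat -> A).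

Local Notation Ev := (Ev r e).
Local Notation Epv := (Epv r s n e).

Lemma Ev_succ k i : Ev k.+1 i = qcomm (e i) (Ev k i.+1) (r ^+ 2).
Proof. by []. Qed.

Lemma Epv_succ k i : Epv k.+1 i = qcomm (Epv k i) (e (n - k.+1)) (s ^- 2).
Proof. by []. Qed.

Lemma Epv0 i : Epv 0 i = qcomm (Ev (n - i) i) (e n) (r * s).
Proof. by []. Qed.

Lemma Eijp_pred_n : (0 < n)%N ->
  Eijp r s n e n.-1 n = qcomm (qcomm (e n.-1) (e n) (r ^+ 2)) (e n) (r * s).
Proof.
by move=> n_gt0; rewrite /Eijp subnn Epv0 (_ : (n - n.-1 = 1)%N) /= ?prednK //; lia.
Qed.

End RootVectors.

Section PositivePart.
Variables (K : fieldType) (A : algType K) (r s : K) (n : nat) (e : nat -> A).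
Hypotheses (r_neq0 : r != 0) (s_neq0 : s != 0) (r2s2_neq0 : r ^+ 2 + s ^+ 2 != 0).
Hypothesis e_comm_far :
  forall i j, (1 <= i)%N -> (i.+2 <= j <= n)%N -> GRing.comm (e i) (e j).
Hypothesis serre_up : forall i, (1 <= i < n)%N ->
  qcomm (e i) (qcomm (e i) (e i.+1) (s ^+ 2)) (r ^+ 2) = 0.
Hypothesis serre_down : forall i, (1 <= i)%N -> (i.+2 <= n)%N ->
  qcomm (qcomm (e i) (e i.+1) (r ^+ 2)) (e i.+1) (s ^+ 2) = 0.
Hypothesis serre_short : qcomm (Eijp r s n e n.-1 n) (e n) (s ^+ 2) = 0.

Local Notation Ev := (Ev r e).
Local Notation Epv := (Epv r s n e).

Lemma comm_e_Ev i k m : (1 <= i)%N -> (i.+2 <= m)%N -> (m + k <= n)%N ->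
  GRing.comm (e i) (Ev k m).
Proof.
elim: k m => [|k IHk] m i_gt0 im mk /=; first by apply: e_comm_far => //; lia.
by apply: commr_qcomm; [apply: e_comm_far | apply: IHk] => //; lia.
Qed.

Lemma serre_up_Ev i k : (1 <= i)%N -> (i.+1 + k <= n)%N ->
  qcomm (e i) (qcomm (e i) (Ev k i.+1) (s ^+ 2)) (r ^+ 2) = 0.
Proof.
case: k => [|k] i_gt0 ik; first by apply: serre_up; lia.
have ieX : GRing.comm (e i) (Ev k i.+2) by apply: comm_e_Ev => //; lia.
rewrite Ev_succ -!(qcommA _ _ _ ieX) serre_up ?qcomm0l //; lia.
Qed.

Lemma qcomm_e_Eij i j : (1 <= i)%N -> (i < j <= n)%N ->
  qcomm (e i) (Eij r e i j) (s ^+ 2) = 0.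
Proof.
move=> i_gt0 ij; rewrite /Eij (_ : (j - i = (j - i.+1).+1)%N); last lia.
by rewrite Ev_succ qcomm2lC serre_up_Ev //; lia.
Qed.

Lemma Epv_recl k i : (1 <= i)%N -> (i.+2 + k <= n)%N ->
  Epv k i = qcomm (e i) (Epv k i.+1) (r ^+ 2).
Proof.
elim: k => [|k IHk] i_gt0 ik.
  rewrite !Epv0 (_ : (n - i = (n - i.+1).+1)%N); last lia.
  by rewrite Ev_succ qcommA //; apply: e_comm_far; lia.
by rewrite !Epv_succ IHk ?qcommA //; [apply: e_comm_far | ]; lia.
Qed.

Lemma serre_up_Epv i k : (1 <= i)%N -> (i.+2 + k <= n)%N ->
  qcomm (e i) (qcomm (e i) (Epv k i.+1) (s ^+ 2)) (r ^+ 2) = 0.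
Proof.
elim: k => [|k IHk] i_gt0 ik.
  have ien : GRing.comm (e i) (e n) by apply: e_comm_far; lia.
  by rewrite Epv0 -!(qcommA _ _ _ ien) serre_up_Ev ?qcomm0l //; lia.
have iej : GRing.comm (e i) (e (n - k.+1)) by apply: e_comm_far; lia.
by rewrite Epv_succ -!(qcommA _ _ _ iej) IHk ?qcomm0l //; lia.
Qed.

Lemma qcomm_e_Eijp i j : (1 <= i)%N -> (i.+1 < j <= n)%N ->
  qcomm (e i) (Eijp r s n e i j) (s ^+ 2) = 0.
Proof.
move=> i_gt0 ij; rewrite /Eijp Epv_recl //; last lia.
by rewrite qcomm2lC serre_up_Epv //; lia.
Qed.

Lemma qcomm_Ev_e k i : (1 <= i)%N -> (i + k.+1 < n)%N ->
  qcomm (Ev k.+1 i) (e (i + k.+1)) (s ^+ 2) = 0.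
Proof.
elim: k i => [|k IHk] i i_gt0 ik; first by rewrite addn1 serre_down //; lia.
rewrite Ev_succ qcommA; last by apply: e_comm_far; lia.
by rewrite -addSnnS IHk ?qcomm0r //; lia.
Qed.

Lemma qcomm_Eij_e i j : (1 <= i)%N -> (i < j < n)%N ->
  qcomm (Eij r e i j) (e j) (s ^+ 2) = 0.
Proof.
move=> i_gt0 ij; have [k jE] : exists k, j = (i + k.+1)%N by exists (j - i.+1)%N; lia.
by subst j; rewrite /Eij addKn qcomm_Ev_e //; lia.
Qed.

Lemma qcomm_Eijp_e_n i : (1 <= i < n)%N ->
  qcomm (Eijp r s n e i n) (e n) (s ^+ 2) = 0.
Proof.
move=> /andP[i_gt0 lt_in]; have [d] : exists d, n = (i + d.+1)%N.
  by exists (n - i.+1)%N; lia.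
elim: d i i_gt0 lt_in => [|d IHd] i i_gt0 lt_in nE.
  by rewrite (_ : i = n.-1) //; lia.
rewrite /Eijp Epv_recl //; last lia.
rewrite qcommA; last by apply: e_comm_far; lia.
by rewrite IHd ?qcomm0r //; lia.
Qed.

Lemma comm_e_Eij_n i : (1 <= i)%N -> (i.+2 <= n)%N ->
  GRing.comm (e i.+1) (Eij r e i n).
Proof.
move=> i_gt0 i2n; have := @qcomm_e_Eij i.+1 n.
rewrite /Eij (_ : (n - i = (n - i.+2).+2)%N); last lia.
rewrite (_ : (n - i.+1 = (n - i.+2).+1)%N); last lia.
rewrite !Ev_succ => serre_Eij; apply: (commr_qcomm_serre (b := s ^+ 2)).
- by rewrite expf_neq0.
- done.
- by apply: comm_e_Ev => //; lia.
- by apply: serre_Eij => //; lia.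
- exact: serre_down.
Qed.

Lemma comm_e_Epv i k : (1 <= i)%N -> (i.+3 + k <= n)%N ->
  GRing.comm (e i.+1) (Epv k i).
Proof.
elim: k => [|k IHk] i_gt0 ik; [rewrite Epv0 | rewrite Epv_succ].
  by apply: commr_qcomm; [apply: comm_e_Eij_n | apply: e_comm_far]; lia.
by apply: commr_qcomm; [apply: IHk | apply: e_comm_far]; lia.
Qed.

Lemma serre_up_rev i : (1 <= i)%N -> (i.+2 <= n)%N ->
  qcomm (qcomm (e i.+2) (e i.+1) (s ^- 2)) (e i.+1) (r ^- 2) = 0.
Proof.
move=> i_gt0 i2n.
by rewrite qcomm2rEl ?invr_neq0 ?expf_neq0 // !invrK serre_up ?scaler0 //; lia.
Qed.

Lemma qcomm_Eijp_succ i : (1 <= i)%N -> (i.+2 <= n)%N ->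
  qcomm (Eijp r s n e i i.+1) (e i.+1) (r ^- 2) = 0.
Proof.
move=> i_gt0 i2n; rewrite /Eijp (_ : (n - i.+1 = (n - i.+2).+1)%N); last lia.
rewrite Epv_succ (_ : (n - (n - i.+2).+1 = i.+1)%N); last lia.
have [H [c [-> comm_H]]] : exists H c,
    Epv (n - i.+2) i = qcomm H (e i.+2) c /\ GRing.comm (e i.+1) H.
  case k_eq : (n - i.+2)%N => [|k]; rewrite ?Epv0 ?Epv_succ.
    exists (Ev (n - i) i), (r * s); split; last exact: comm_e_Eij_n.
    by congr (qcomm _ (e _) _); lia.
  exists (Epv k i), (s ^- 2); split; last by apply: comm_e_Epv; lia.
  by congr (qcomm _ (e _) _); lia.
have Hy := commr_sym comm_H.
by rewrite !(qcommA _ _ _ Hy) serre_up_rev ?qcomm0r.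
Qed.

Lemma qcomm_Eijp_e i j : (1 <= i)%N -> (i < j < n)%N ->
  qcomm (Eijp r s n e i j) (e j) (r ^- 2) = 0.
Proof.
move=> i_gt0 ij; have [d jE] : exists d, j = (i + d.+1)%N by exists (j - i.+1)%N; lia.
subst j; elim: d i i_gt0 ij => [|d IHd] i i_gt0 ij.
  by rewrite addn1 qcomm_Eijp_succ //; lia.
rewrite /Eijp Epv_recl //; last lia.
rewrite qcommA; last by apply: e_comm_far; lia.
by rewrite -addSnnS IHd ?qcomm0r //; lia.
Qed.
End PositivePart.

Section DefiningRelations.
Variables (K : fieldType) (A : algType K) (r s : K) (n : nat).
Variables (e f w winv w' w'inv : nat -> A).
Hypothesis rels : Urs_relations r s n e f w winv w' w'inv.

Lemma winv_w i : (1 <= i <= n)%N -> winv i * w i = 1.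
Proof. by move=> hi; case: rels => /(_ i hi) []. Qed.

Lemma conj_w_e i j : (1 <= i <= n)%N -> (1 <= j <= n)%N ->
  w j * e i * winv j = pairing r s n i j *: e i.
Proof. by move=> hi hj; case: rels => _ _ /(_ i j hi hj) []. Qed.

Lemma adl_serre i j : (1 <= i <= n)%N -> (1 <= j <= n)%N -> i != j ->
  iter (serre_exp n i j) (adl (e i) (w i) (winv i)) (e j) = 0.
Proof. by move=> hi hj ij; case: rels => _ _ _ _ /(_ i j hi hj ij) []. Qed.

Lemma e_comm_far i j : (1 <= i)%N -> (i.+2 <= j <= n)%N -> GRing.comm (e i) (e j).
Proof.
move=> i_gt0 ij; have w_ej : w i * e j * winv i = 1 *: e j.
  by rewrite conj_w_e ?pairing_far //; lia.
have : iter (serre_exp n i j) (adl (e i) (w i) (winv i)) (e j) = 0.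
  by apply: adl_serre; lia.
rewrite serre_exp_far /=; last lia.
by rewrite (adl_qcomm _ w_ej) => /qcomm_eq0; rewrite scale1r.
Qed.

Lemma serre_up_e : s != 0 -> forall i, (1 <= i < n)%N ->
  qcomm (e i) (qcomm (e i) (e i.+1) (s ^+ 2)) (r ^+ 2) = 0.
Proof.
move=> s_neq0 i lt_in; have hi : (1 <= i <= n)%N by lia.
have w_e : w i * e i * winv i = (r ^+ 2 / s ^+ 2) *: e i.
  by rewrite conj_w_e ?pairing_diag //; lia.
have w_e1 : w i * e i.+1 * winv i = s ^+ 2 *: e i.+1.
  by rewrite conj_w_e ?pairing_down //; lia.
have w_e_e1 := conj_qcomm (s ^+ 2) (winv_w hi) w_e w_e1.
have : iter (serre_exp n i i.+1) (adl (e i) (w i) (winv i)) (e i.+1) = 0.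
  by apply: adl_serre; lia.
by rewrite serre_exp_up /= (adl_qcomm _ w_e1) (adl_qcomm _ w_e_e1) divfK ?expf_neq0.
Qed.

Lemma serre_down_e : r != 0 -> s != 0 -> forall i, (1 <= i)%N -> (i.+2 <= n)%N ->
  qcomm (qcomm (e i) (e i.+1) (r ^+ 2)) (e i.+1) (s ^+ 2) = 0.
Proof.
move=> r_neq0 s_neq0 i i_gt0 i2n; have hi1 : (1 <= i.+1 <= n)%N by lia.
have w_e : w i.+1 * e i * winv i.+1 = r ^- 2 *: e i.
  by rewrite conj_w_e ?pairing_up //; lia.
have w_e1 : w i.+1 * e i.+1 * winv i.+1 = (r ^+ 2 / s ^+ 2) *: e i.+1.
  by rewrite conj_w_e ?pairing_diag //; lia.
have w_e1_e := conj_qcomm (r ^- 2) (winv_w hi1) w_e1 w_e.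
have : iter (serre_exp n i.+1 i) (adl (e i.+1) (w i.+1) (winv i.+1)) (e i) = 0.
  by apply: adl_serre; lia.
rewrite serre_exp_down /=; last lia.
rewrite (adl_qcomm _ w_e) (adl_qcomm _ w_e1_e).
have -> : r ^+ 2 / s ^+ 2 * r ^- 2 = s ^- 2 by field; rewrite r_neq0 s_neq0.
by rewrite qcomm2rEl ?expf_neq0 // => ->; rewrite scaler0.
Qed.

Lemma serre_short_e : r != 0 -> s != 0 -> (2 <= n)%N ->
  qcomm (Eijp r s n e n.-1 n) (e n) (s ^+ 2) = 0.
Proof.
move=> r_neq0 s_neq0 n_gt1; have hn : (1 <= n <= n)%N by lia.
have w_e : w n * e n.-1 * winv n = r ^- 2 *: e n.-1.
  by rewrite conj_w_e ?pairing_pred_n //; lia.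
have w_en : w n * e n * winv n = (r / s) *: e n by rewrite conj_w_e ?pairing_nn.
have w_e2 := conj_qcomm (r ^- 2) (winv_w hn) w_en w_e.
have w_e3 := conj_qcomm (r / s * r ^- 2) (winv_w hn) w_en w_e2.
have c1_neq0 : r ^- 2 != 0 by rewrite invr_neq0 ?expf_neq0.
have rs_neq0 : r / s != 0 by rewrite mulf_neq0 ?invr_neq0.
have c2_neq0 : r / s * r ^- 2 != 0 by rewrite mulf_neq0.
have c3_neq0 : r / s * (r / s * r ^- 2) != 0 by rewrite mulf_neq0.
have : iter (serre_exp n n n.-1) (adl (e n) (w n) (winv n)) (e n.-1) = 0.
  by apply: adl_serre; lia.
rewrite serre_exp_short /=; last lia.
rewrite (adl_qcomm _ w_e) (adl_qcomm _ w_e2) (adl_qcomm _ w_e3).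
move/(qcomm3C_eq0 c1_neq0 c2_neq0 c3_neq0); rewrite invrK.
have -> : (r / s * r ^- 2)^-1 = r * s by field; rewrite r_neq0 s_neq0 oner_eq0.
have -> : (r / s * (r / s * r ^- 2))^-1 = s ^+ 2.
  by field; rewrite r_neq0 s_neq0 oner_eq0.
by rewrite Eijp_pred_n //; lia.
Qed.
End DefiningRelations.

Theorem lemma3p2 (K : fieldType) (A : algType K) (r s : K) (n : nat)
    (e f w winv w' w'inv : nat -> A) :
  r != 0 -> s != 0 -> r ^+ 3 != s ^+ 3 -> r ^+ 4 != s ^+ 4 -> (2 <= n)%N ->
  Urs_relations r s n e f w winv w' w'inv ->
  [/\ (forall i j, (1 <= i)%N -> (i < j <= n)%N ->
         e i * Eij r e i j = s ^+ 2 *: (Eij r e i j * e i)),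
      (forall i j, (1 <= i)%N -> (i.+1 < j <= n)%N ->
         e i * Eijp r s n e i j = s ^+ 2 *: (Eijp r s n e i j * e i)),
      (forall i j, (1 <= i)%N -> (i < j < n)%N ->
         Eij r e i j * e j = s ^+ 2 *: (e j * Eij r e i j)),
      (forall i, (1 <= i < n)%N ->
         Eijp r s n e i n * e n = s ^+ 2 *: (e n * Eijp r s n e i n))
    & (forall i j, (1 <= i)%N -> (i < j < n)%N ->
         Eijp r s n e i j * e j = r ^- 2 *: (e j * Eijp r s n e i j))].
Proof.
move=> r_neq0 s_neq0 _ r4s4 n_gt1 rels.
have r2s2_neq0 : r ^+ 2 + s ^+ 2 != 0.
  move: r4s4; rewrite -subr_eq0.
  have -> : r ^+ 4 - s ^+ 4 = (r ^+ 2 + s ^+ 2) * (r ^+ 2 - s ^+ 2) by ring.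
  by rewrite mulf_eq0 negb_or => /andP[].
have far := e_comm_far rels.
have up := serre_up_e rels s_neq0.
have down := serre_down_e rels r_neq0 s_neq0.
have short := serre_short_e rels r_neq0 s_neq0 n_gt1.
split=> [i j | i j | i j | i | i j] *; apply/qcomm_eq0.
- by apply: (qcomm_e_Eij (n := n)).
- by apply: qcomm_e_Eijp.
- by apply: (qcomm_Eij_e (n := n)).
- by apply: qcomm_Eijp_e_n.
- by apply: qcomm_Eijp_e.
Qed.
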